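(* Let $G_1$ be a graph isomorphic to a minor of a weakly 4-connected graph $H$. Let $P=\{p_1,p_2\}$, $Q=\{q_1,q_2,q_3\}$ and $R$ form a partition of $V(G_1)$ such that $G_1$ contains all edges between $P$ and $Q$, no edge has both ends in $Q$, $|R|\ge2$, and $(P\cup Q,\,Q\cup R)$ is a non-trivial separation of $G_1$ of order three. Then $H$ has a minor isomorphic to a graph $G_1^+$ obtained from $G_1$ by either (1) adding an edge between $p_i$ and $r$ for some $i\in\{1,2\}$ and some $r\in R$, or (2) splitting $q_j$, for some $j\in\{1,2,3\}$, into two adjacent vertices $q_j^1,q_j^2$ such that $q_j^1$ is adjacent to $p_1$ and $q_j^2$ is adjacent to $p_2$.
   Context: Graphs are finite and simple. A separation of $G$ is a pair $(A,B)$ of subsets of $V(G)$ with $A\cup B=V(G)$ and no edge between $A-B$ and $B-A$; its order is $|A\cap B|$; it is non-trivial if $A\ne V(G)\ne B$. A graph is weakly 4-connected if it is 3-connected, has at least five vertices, and for every separation $(A,B)$ of order at most three one of $G[A]$, $G[B]$ has at most four edges. Splitting a vertex $v$: for a partition $(N_1,N_2)$ of the neighbours of $v$ with $|N_1|,|N_2|\ge2$, replace $v$ by two adjacent new vertices $v_1,v_2$ with $v_i$ adjacent to exactly the vertices of $N_i$. *)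

From mathcomp Require Import all_boot.
Set Implicit Arguments. Unset Strict Implicit. Unset Printing Implicit Defensive.

Section Graphs.
Variable T : finType.

Definition simple_graph (e : rel T) : Prop := symmetric e /\ irreflexive e.

Definition induced (e : rel T) (S : {set T}) : rel T :=
  [rel x y | [&& x \in S, y \in S & e x y]].

(* G[S] is connected (the empty graph counts as connected here) *)
Definition connected_in (e : rel T) (S : {set T}) : Prop :=
  forall x y, x \in S -> y \in S -> connect (induced e S) x y.

Definition k_connected (k : nat) (e : rel T) : Prop :=
  k < #|T| /\ forall X : {set T}, #|X| < k -> connected_in e (~: X).

Definition separation (e : rel T) (A B : {set T}) : Prop :=
  A :|: B = setT /\
  forall x y, x \in A :\: B -> y \in B :\: A -> ~~ e x y.

Definition sep_order (A B : {set T}) : nat := #|A :&: B|.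

Definition nontrivial_sep (A B : {set T}) : Prop := A != setT /\ B != setT.

Definition edges_in (e : rel T) (A : {set T}) : nat :=
  (#|[set p : T * T | [&& p.1 \in A, p.2 \in A & e p.1 p.2]]|)./2.

Definition weakly_4_connected (e : rel T) : Prop :=
  k_connected 3 e /\ 5 <= #|T| /\
  forall A B : {set T}, separation e A B -> sep_order A B <= 3 ->
    edges_in e A <= 4 \/ edges_in e B <= 4.

Definition add_edge (e : rel T) (a b : T) : rel T :=
  [rel x y | [|| e x y, (x == a) && (y == b) | (x == b) && (y == a)]].

Definition neighbours (e : rel T) (v : T) : {set T} := [set y | e v y].

Definition split_partition (e : rel T) (v : T) (N1 N2 : {set T}) : Prop :=
  N1 :|: N2 = neighbours e v /\ N1 :&: N2 = set0 /\ 2 <= #|N1| /\ 2 <= #|N2|.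

(* Splitting v along (N1,N2): vertex set option T, where Some v plays the role
   of v1 (adjacent to N1), None plays v2 (adjacent to N2), v1v2 is an edge,
   and Some x (x != v) are the other vertices. *)
Definition split_rel (e : rel T) (v : T) (N1 N2 : {set T}) : rel (option T) :=
  fun a b =>
    match a, b with
    | Some x, Some y =>
        if x == v then (y != v) && (y \in N1)
        else if y == v then x \in N1 else e x y
    | Some x, None => (x == v) || (x \in N2)
    | None, Some y => (y == v) || (y \in N2)
    | None, None => false
    end.

End Graphs.

Definition has_minor (U : finType) (f : rel U) (T : finType) (e : rel T) : Prop :=
  exists branch : T -> {set U},
    (forall x, branch x != set0) /\
    (forall x y, x != y -> [disjoint branch x & branch y]) /\
    (forall x, connected_in f (branch x)) /\
    (forall x y, e x y -> exists u v, [/\ u \in branch x, v \in branch y & f u v]).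

From mathcomp Require Import all_boot zify.
From Stdlib Require Import Classical.
Set Implicit Arguments. Unset Strict Implicit. Unset Printing Implicit Defensive.

(* The proof is extremal.  Among all models of G1 in H (families of disjoint
   connected branch sets, adjacent along the edges of G1), we show that unless
   one of the two outcomes holds, any model can be modified so that the union
   P_part of the branch sets of p1 and p2 strictly grows; since P_part is
   bounded by |V(H)|, this is impossible.  Given a model B:
   - if B p (p in P) is adjacent to some B r (r in R), B models G1 + pr;
   - if P_part has a neighbour outside all branch sets, absorb it;
   - if some B q (q in Q) has distinct vertices attached to B p1 and to B p2,
     bipartition B q into connected parts and move one part into P_part,
     unless the parts see different R-neighbours of q: that is a split of q;
   - otherwise the boundary of P_part has at most three vertices (one per
     branch set of Q), contradicting weak 4-connectivity. *)

Lemma no_strict_improvement (X : Type) (P : X -> Prop) (m : X -> nat) (bound : nat) :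
  (forall x, P x -> m x <= bound) ->
  (forall x, P x -> exists y, P y /\ m x < m y) -> forall x, ~ P x.
Proof.
move=> bounded improve.
suff gap k x : P x -> bound - m x <= k -> False by move=> x Px; exact: gap _ x Px (leqnn _).
elim: k x => [|k IH] x Px gap_x; have [y [Py lt_xy]] := improve x Px.
  by have := bounded y Py; lia.
by apply: (IH y Py); have := bounded y Py; lia.
Qed.

Lemma subset_card_lt (U : finType) (A A' : {set U}) w :
  A \subset A' -> w \in A' -> w \notin A -> #|A| < #|A'|.
Proof. by move=> sub wA' wA; apply: proper_card; apply/properP; split => //; exists w. Qed.

Lemma path_exit (U : finType) (r : rel U) (A : {set U}) x p :
  x \in A -> path r x p -> last x p \notin A ->
  exists u v, [/\ u \in A, v \notin A & r u v].
Proof.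
elim: p x => [|y p IH] x xA /=; first by rewrite xA.
case/andP=> rxy pth lst; case: (boolP (y \in A)) => yA; first exact: IH yA pth lst.
by exists x, y.
Qed.

Section Connectivity.
Variables (U : finType) (f : rel U).
Hypothesis fsym : symmetric f.

Lemma connect_induced_sym (S : {set U}) : connect_sym (induced f S).
Proof. by apply: sym_connect_sym => x y; rewrite /induced /= andbCA fsym. Qed.

Lemma connect_induced_mono (S S' : {set U}) x y : S \subset S' ->
  connect (induced f S) x y -> connect (induced f S') x y.
Proof.
move=> sub; apply: connect_sub => a b /and3P [aS bS fab].
by apply: connect1; rewrite /induced /= (subsetP sub _ aS) (subsetP sub _ bS).
Qed.

Lemma connected_from (S : {set U}) a :
  (forall x, x \in S -> connect (induced f S) a x) -> connected_in f S.
Proof.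
move=> reach x y xS yS; apply: (connect_trans (y := a)); last exact: reach.
by rewrite connect_induced_sym; exact: reach.
Qed.

Lemma connected_set1 x : connected_in f [set x].
Proof. by move=> a b; rewrite !inE => /eqP -> /eqP ->; exact: connect0. Qed.

Lemma connected_setU (A B : {set U}) a b : connected_in f A -> connected_in f B ->
  a \in A -> b \in B -> f a b -> connected_in f (A :|: B).
Proof.
move=> cA cB aA bB fab; apply: (connected_from (a := a)) => x; rewrite inE => /orP [xA|xB].
  exact: connect_induced_mono (subsetUl A B) (cA _ _ aA xA).
apply: (connect_trans (y := b)).
  by apply: connect1; rewrite /induced /= !inE aA bB orbT fab.
exact: connect_induced_mono (subsetUr A B) (cB _ _ bB xB).
Qed.

Lemma connected_exit (S C : {set U}) c1 c2 : connected_in f S -> c1 \in S -> c2 \in S ->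
  c1 \in C -> c2 \notin C ->
  exists u v, [/\ u \in C, u \in S, v \in S, v \notin C & f u v].
Proof.
move=> cS c1S c2S c1C c2C; have /connectP [p pth lst] := cS _ _ c1S c2S.
have := path_exit c1C pth; rewrite -lst => /(_ c2C) [u [v [uC vC /and3P [uS vS fuv]]]].
by exists u, v.
Qed.

Definition component (S : {set U}) y := [set w in S | connect (induced f S) y w].

Lemma component_connected (S : {set U}) y : y \in S -> connected_in f (component S y).
Proof.
move=> yS; apply: (connected_from (a := y)) => w; rewrite inE => /andP [_ /connectP [p pth ->]].
apply/connectP; exists p => //.
suff walk x : x \in S -> connect (induced f S) y x -> path (induced f S) x p ->
    path (induced f (component S y)) x p by exact: walk (connect0 _ _) pth.
elim: p x {pth} => //= z p IH x xS cyx /andP [/and3P [_ zS fxz] pth].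
have cyz : connect (induced f S) y z.
  by apply: connect_trans cyx (connect1 _); rewrite /induced /= xS zS.
by rewrite /induced /= !inE xS zS cyx cyz fxz /=; exact: IH.
Qed.

Lemma connected_complement_or_grow (K C : {set U}) s : connected_in f K ->
  C \subset K -> C != set0 -> connected_in f C -> s \in K -> s \notin C ->
  connected_in f (K :\: C) \/
  exists C' : {set U}, [/\ C \subset C', C' \subset K, s \notin C', connected_in f C' & #|C| < #|C'|].
Proof.
move=> cK CK /set0Pn [c cinC] cC sK sC.
have sD : s \in K :\: C by rewrite inE sC sK.
case: (classic (forall y, y \in K :\: C -> connect (induced f (K :\: C)) s y)) => [reach|].
  by left; exact: connected_from reach.
move=> /not_all_ex_not [y not_reach]; have [yD not_sy] := imply_to_and _ _ not_reach; right.
set D := component (K :\: C) y.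
have yDy : y \in D by rewrite inE yD connect0.
have DK : D \subset K by apply/subsetP => x; rewrite !inE => /andP [/andP [_ ->]].
have cDC : c \notin D by rewrite !inE cinC.
have [u [v [uD _ vK vD fuv]]] := connected_exit cK (subsetP DK _ yDy) (subsetP CK _ cinC) yDy cDC.
have vC : v \in C.
  apply: contraNT vD => vC; have vKC : v \in K :\: C by rewrite inE vC vK.
  move: uD; rewrite inE => /andP [uKC cyu]; rewrite inE vKC.
  by apply: connect_trans cyu (connect1 _); rewrite /induced /= uKC vKC fuv.
have sDs : s \notin D.
  by rewrite inE sD /=; apply/negP; rewrite connect_induced_sym.
exists (C :|: D); split.
- exact: subsetUl.
- by rewrite subUset CK DK.
- by rewrite inE negb_or sC.
- by apply: connected_setU (component_connected yD) vC uD _ => //; rewrite fsym.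
- apply: (subset_card_lt (w := y) (subsetUl C D)); first by rewrite inE yDy orbT.
  by move: yD; rewrite inE => /andP [].
Qed.

(* Take a largest connected
   part around s' avoiding s; its complement must then be connected. *)
Lemma connected_bipartition (K : {set U}) s s' : connected_in f K -> s \in K -> s' \in K ->
  s != s' -> exists C1 C2 : {set U}, [/\ C1 :|: C2 = K, [disjoint C1 & C2],
    connected_in f C1, connected_in f C2 & s \in C1 /\ s' \in C2].
Proof.
move=> cK sK s'K ss'; apply: NNPP => no_split.
pose P (C : {set U}) := [/\ C \subset K, s' \in C, s \notin C & connected_in f C].
apply: (@no_strict_improvement _ P (fun C => #|C|) #|U| (fun C _ => max_card _) _ [set s']).
  move=> C [CK s'C sC cC].
  have Cne : C != set0 by apply/set0Pn; exists s'.
  case: (connected_complement_or_grow cK CK Cne cC sK sC) => [cD|[C' [sub C'K sC' cC' lt]]].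
    exfalso; apply: no_split; exists (K :\: C), C; split => //.
    - by rewrite -[RHS](setID K C) setUC (setIidPr CK).
    - by rewrite disjoints_subset; apply/subsetP => x; rewrite !inE => /andP [-> _].
    - by rewrite inE sC sK.
  by exists C'; split => //; split => //; exact: subsetP sub _ s'C.
by split; rewrite ?sub1set ?inE ?eqxx // 1?eq_sym //; exact: connected_set1.
Qed.

End Connectivity.

Section WeaklyFourConnected.
Variables (U : finType) (f : rel U).
Hypotheses (fsym : symmetric f) (firr : irreflexive f).

(* In a 3-connected graph every vertex y has at least three neighbours:
   otherwise deleting them would cut y off from the rest of the graph. *)
Lemma min_degree3 : k_connected 3 f -> forall y, 3 <= #|neighbours f y|.
Proof.
case=> big conn y; set N := neighbours f y; rewrite leqNgt; apply/negP => small.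
have yN : y \notin N by rewrite inE firr.
have [z] : exists z, z \notin y |: N.
  apply/existsP; rewrite -(negbK [exists _, _]) negb_exists; apply/negP => /forallP all_in.
  have : #|U| <= #|y |: N| by apply: subset_leq_card; apply/subsetP => x _; exact: negbNE (all_in x).
  by rewrite cardsU1 yN add1n; lia.
rewrite !inE negb_or => /andP [zy zN].
have yC : y \in ~: N by rewrite inE yN.
have zC : z \in ~: N by rewrite !inE zN.
have /connectP [p pth lst] := conn N small y z yC zC.
have := path_exit (set11 y) pth; rewrite -lst inE => /(_ zy) [u [v [/set1P -> _ /and3P [_ vN fyv]]]].
by move: vN; rewrite !inE fyv.
Qed.

Lemma separation_closed (A B : {set U}) y z :
  separation f A B -> y \in B :\: A -> f y z -> z \in B.
Proof.
case=> cover no_edge yBA fyz; apply: contraT => zB.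
have zA : z \in A by have := in_setT z; rewrite -cover inE (negbTE zB) orbF.
have zAB : z \in A :\: B by rewrite inE zB zA.
by have := no_edge z y zAB yBA; rewrite fsym fyz.
Qed.

Lemma separation_sym (A B : {set U}) : separation f A B -> separation f B A.
Proof.
by case=> cover no_edge; split; [rewrite setUC | move=> x y xB yA; rewrite fsym; apply: no_edge].
Qed.

(* Counting ordered
   adjacent pairs: at least 6 start in {y1,y2}, as many end there, and at most
   the two pairs (y1,y2), (y2,y1) are counted twice. *)
Lemma separation_side_edges (A B : {set U}) y1 y2 : k_connected 3 f ->
  separation f A B -> y1 \in B :\: A -> y2 \in B :\: A -> y1 != y2 -> 5 <= edges_in f B.
Proof.
move=> k3 sep y1B y2B y12.
set E := [set p : U * U | [&& p.1 \in B, p.2 \in B & f p.1 p.2]].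
set S := [set y1; y2].
set M := [set p in E | p.1 \in S]; set W := [set p in E | p.2 \in S].
have out_M y : y \in B :\: A -> y \in S -> pair y @: neighbours f y \subset M.
  move=> yBA yS; apply/subsetP => p /imsetP [z]; rewrite inE => fyz ->.
  have zB := separation_closed sep yBA fyz.
  by move: yS yBA; rewrite !inE /= zB fyz => -> /andP [_ ->].
have card_out y : #|pair y @: neighbours f y| = #|neighbours f y| by apply: card_imset => a b [].
have M6 : 6 <= #|M|.
  have disj : [disjoint pair y1 @: neighbours f y1 & pair y2 @: neighbours f y2].
    rewrite -setI_eq0; apply/eqP/setP => p; rewrite !inE.
    by apply/andP => -[/imsetP [? _ ->] /imsetP [? _ [/eqP]]]; rewrite (negbTE y12).
  have union_card : #|pair y1 @: neighbours f y1 :|: pair y2 @: neighbours f y2| =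
      #|neighbours f y1| + #|neighbours f y2|.
    by rewrite -!card_out; apply/eqP; rewrite (leq_card_setU _ _).2.
  have := subset_leq_card (setUSS (out_M _ y1B (set21 _ _)) (out_M _ y2B (set22 _ _))).
  rewrite setUid union_card.
  by have := min_degree3 k3 y1; have := min_degree3 k3 y2; lia.
have MW : #|M| <= #|W|.
  rewrite -(card_imset _ (can_inj swap_pairK)); apply: subset_leq_card.
  apply/subsetP => p /imsetP [[a b]]; rewrite !inE /= => /andP [/and3P [aB bB fab] aS] ->.
  by rewrite /swap_pair /= aS bB aB fsym fab.
have MW2 : #|M :&: W| <= 2.
  apply: (@leq_trans #|[set (y1, y2); (y2, y1)]|); last by rewrite cards2; case: (_ != _).
  apply: subset_leq_card.
  apply/subsetP => -[a b]; rewrite !inE /= => /andP [/andP [/and3P [_ _ fab] aS] /andP [_ bS]].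
  have ab : a != b by apply: contraTneq fab => ->; rewrite firr.
  by move: aS bS ab => /orP [] /eqP -> /orP [] /eqP ->; rewrite ?eqxx ?orbT.
have ME : M :|: W \subset E.
  by rewrite subUset; apply/andP; split; apply/subsetP => p; rewrite inE => /andP [].
rewrite /edges_in -/E; apply: leq_trans (half_leq (subset_leq_card ME)).
by rewrite cardsU; lia.
Qed.

(* Weak 4-connectivity forbids a separation of order at most three with two
   vertices strictly on each side: both sides would carry five edges. *)
Lemma no_balanced_separation (A B : {set U}) a1 a2 b1 b2 : weakly_4_connected f ->
  separation f A B -> #|A :&: B| <= 3 ->
  a1 \in A :\: B -> a2 \in A :\: B -> a1 != a2 ->
  b1 \in B :\: A -> b2 \in B :\: A -> b1 != b2 -> False.
Proof.
case=> k3 [_ small_side] sep ord a1A a2A a12 b1B b2B b12.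
have eB := separation_side_edges k3 sep b1B b2B b12.
have eA := separation_side_edges k3 (separation_sym sep) a1A a2A a12.
by case: (small_side A B sep ord); lia.
Qed.

Definition boundary (X : {set U}) := [set w | (w \notin X) && [exists u in X, f u w]].

(* In a weakly 4-connected graph, a set X with two vertices whose closed
   neighbourhood misses two vertices has at least four boundary vertices:
   (X + boundary X, V - X) is a separation of order #|boundary X|. *)
Lemma boundary_ge4 (X : {set U}) a1 a2 b1 b2 : weakly_4_connected f ->
  a1 \in X -> a2 \in X -> a1 != a2 ->
  b1 \notin X :|: boundary X -> b2 \notin X :|: boundary X -> b1 != b2 ->
  3 < #|boundary X|.
Proof.
move=> W4 a1X a2X a12 b1X b2X b12; rewrite ltnNge; apply/negP => small.
have sep : separation f (X :|: boundary X) (~: X).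
  split; first by apply/setP => x; rewrite !inE; case: (x \in X); rewrite ?orbT.
  move=> x y; rewrite !inE negbK => /andP [xX _] /andP [yXb yX]; apply/negP => fxy.
  by move: yXb; rewrite (negbTE yX) /= => /existsPn /(_ x); rewrite xX fxy.
apply: (no_balanced_separation W4 sep _ _ _ a12 _ _ b12).
- apply: leq_trans small; apply: subset_leq_card.
  by apply/subsetP => x; rewrite !inE => /andP [/orP [xX|xb] nX] //; rewrite xX in nX.
- by rewrite !inE a1X.
- by rewrite !inE a2X.
- by move: b1X; rewrite !inE negb_or => /andP [-> ->].
- by move: b2X; rewrite !inE negb_or => /andP [-> ->].
Qed.

End WeaklyFourConnected.

Lemma disjoint_familyP (I : eqType) (U : finType) (B : I -> {set U}) :
  (forall x y, x != y -> [disjoint B x & B y]) <->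
  (forall x y u, u \in B x -> u \in B y -> x = y).
Proof.
split=> [dj x y u ux uy | owner x y xy].
  by apply/eqP; apply: contraTT ux => /dj /disjointFl ->.
by rewrite disjoints_subset; apply/subsetP => u ux; rewrite inE; apply: contra xy => /(owner _ _ _ ux) ->.
Qed.

Section Models.
Variables (U : finType) (f : rel U) (T : finType) (e : rel T).
Hypotheses (fsym : symmetric f) (esym : symmetric e) (eirr : irreflexive e).

Definition adjacent (X Y : {set U}) := exists u v, [/\ u \in X, v \in Y & f u v].

Definition adjacentb (X Y : {set U}) := [exists u in X, exists v in Y, f u v].

Lemma adjacentP (X Y : {set U}) : reflect (adjacent X Y) (adjacentb X Y).
Proof.
apply: (iffP existsP) => [[u /andP [uX /existsP [v /andP [vY fuv]]]]|[u [v [uX vY fuv]]]].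
  by exists u, v.
by exists u; rewrite uX; apply/existsP; exists v; rewrite vY.
Qed.

Lemma adjacent_sym (X Y : {set U}) : adjacent X Y -> adjacent Y X.
Proof. by move=> [u [v [uX vY fuv]]]; exists v, u; rewrite fsym. Qed.

Lemma adjacent_setU (X1 X2 Y : {set U}) :
  adjacent (X1 :|: X2) Y -> adjacent X1 Y \/ adjacent X2 Y.
Proof. by move=> [u [v [/setUP [uX|uX] vY fuv]]]; [left | right]; exists u, v. Qed.

Lemma adjacent_mono (X X' Y Y' : {set U}) :
  X \subset X' -> Y \subset Y' -> adjacent X Y -> adjacent X' Y'.
Proof. by move=> sX sY [u [v [uX vY fuv]]]; exists u, v; rewrite (subsetP sX _ uX) (subsetP sY _ vY). Qed.

Definition is_model (I : finType) (g : rel I) (B : I -> {set U}) :=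
  (forall x, B x != set0) /\ (forall x y, x != y -> [disjoint B x & B y]) /\
  (forall x, connected_in f (B x)) /\ (forall x y, g x y -> adjacent (B x) (B y)).

Lemma model_update (B B' : T -> {set U}) p q (D : {set U}) :
  is_model e B ->
  (forall x, x != q -> B x \subset B' x) ->
  (forall x, x != p -> B' x \subset B x) ->
  B' p \subset B p :|: D ->
  (forall y, y != p -> [disjoint D & B' y]) ->
  (forall x, x \in [set p; q] -> B' x != set0 /\ connected_in f (B' x)) ->
  (forall y, e q y -> adjacent (B' q) (B' y)) ->
  is_model e B'.
Proof.
move=> [ne [dj [conn adj]]] grow shrink absorb fresh new edges_q.
have same x : x \notin [set p; q] -> B' x = B x.
  rewrite !inE negb_or => /andP [xp xq].
  by apply/eqP; rewrite eqEsubset shrink // grow.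
split; [|split; [|split]].
- by move=> x; case: (boolP (x \in [set p; q])) => [/new []|/same ->].
- apply/disjoint_familyP => x y u.
  have from_p z : z != p -> u \in B' p -> u \in B' z -> False.
    move=> zp /(subsetP absorb); rewrite inE => /orP [up|uD] uz.
      have := (disjoint_familyP B).1 dj _ _ _ up (subsetP (shrink _ zp) _ uz).
      by apply/eqP; rewrite eq_sym.
    by have := disjointFr (fresh _ zp) uD; rewrite uz.
  case: (eqVneq x p) => [->|xp]; case: (eqVneq y p) => [->|yp] // ux uy.
  + by case: (from_p _ yp ux uy).
  + by case: (from_p _ xp uy ux).
  + exact: (disjoint_familyP B).1 dj _ _ _ (subsetP (shrink _ xp) _ ux) (subsetP (shrink _ yp) _ uy).
- by move=> x; case: (boolP (x \in [set p; q])) => [/new []|/same ->].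
- move=> x y; case: (eqVneq x q) => [-> /edges_q //|xq].
  case: (eqVneq y q) => [-> exq|yq exy]; first by apply/adjacent_sym/edges_q; rewrite esym.
  exact: adjacent_mono (grow _ xq) (grow _ yq) (adj _ _ exy).
Qed.

Definition transfer (B : T -> {set U}) p q (D C : {set U}) :=
  fun x => if x == p then B p :|: D else if x == q then C else B x.

Lemma transfer_sub (B : T -> {set U}) p q (D C : {set U}) x :
  x != q -> B x \subset transfer B p q D C x.
Proof. by move=> /negbTE xq; rewrite /transfer; case: eqP => [->|_]; [exact: subsetUl | rewrite xq]. Qed.

Lemma bipartition_adjacent (K C1 C2 : {set U}) : connected_in f K ->
  C1 :|: C2 = K -> [disjoint C1 & C2] -> C1 != set0 -> C2 != set0 -> adjacent C1 C2.
Proof.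
move=> cK CE C12 /set0Pn [c1 c1C] /set0Pn [c2 c2C].
have inK c : c \in C1 \/ c \in C2 -> c \in K by rewrite -CE inE => -[] ->; rewrite ?orbT.
have c2C1 : c2 \notin C1 by rewrite (disjointFl C12 c2C).
have [u [v [uC _ vK vC fuv]]] :=
  connected_exit cK (inK _ (or_introl c1C)) (inK _ (or_intror c2C)) c1C c2C1.
by exists u, v; split => //; move: vK; rewrite -CE inE (negbTE vC).
Qed.

Lemma model_transfer (B : T -> {set U}) p q (C1 C2 : {set U}) :
  is_model e B -> p != q -> C1 :|: C2 = B q -> [disjoint C1 & C2] ->
  C2 != set0 -> connected_in f C2 -> connected_in f (B p :|: C1) -> adjacent C1 C2 ->
  (forall y, e q y -> y != p -> adjacent C2 (B y)) ->
  is_model e (transfer B p q C1 C2).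
Proof.
move=> mB pq CE C12 ne2 c2 cp a12 adj2; have [ne [dj _]] := mB.
have C1B : C1 \subset B q by rewrite -CE subsetUl.
have C2B : C2 \subset B q by rewrite -CE subsetUr.
have qp : q != p by rewrite eq_sym.
apply: (model_update (p := p) (q := q) (D := C1) mB).
- by move=> x; exact: transfer_sub.
- by move=> x /negbTE xp; rewrite /transfer /= xp; case: eqP => [->|].
- by rewrite /transfer /= eqxx.
- move=> y /negbTE yp; rewrite /transfer /= yp; case: (eqVneq y q) => [//|yq].
  rewrite disjoints_subset; apply/subsetP => u /(subsetP C1B) uq.
  by rewrite inE (disjointFr (dj q y _) uq) // eq_sym.
- move=> x; rewrite !inE => /orP [] /eqP ->; rewrite /transfer /= ?eqxx ?(negbTE qp) //.
  by split => //; apply/set0Pn; have [u uP] := set0Pn _ (ne p); exists u; rewrite inE uP.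
- move=> y eqy; rewrite /transfer /= eqxx (negbTE qp); case: (eqVneq y p) => [_|yp].
    exact: adjacent_mono (subxx _) (subsetUr _ _) (adjacent_sym a12).
  have yq : y != q by apply: contraTneq eqy => ->; rewrite eirr.
  by rewrite (negbTE yq); exact: adj2.
Qed.

Lemma model_add_edge (B : T -> {set U}) p r :
  is_model e B -> adjacent (B p) (B r) -> is_model (add_edge e p r) B.
Proof.
move=> [ne [dj [conn adj]]] adj_pr; split; [done|split; [done|split; [done|]]].
move=> x y /or3P [/adj //|/andP [/eqP-> /eqP->] //|/andP [/eqP-> /eqP->]].
exact: adjacent_sym.
Qed.

Lemma model_split (B : T -> {set U}) q (C1 C2 : {set U}) (N1 N2 : {set T}) :
  is_model e B -> C1 :|: C2 = B q -> [disjoint C1 & C2] -> C1 != set0 -> C2 != set0 ->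
  connected_in f C1 -> connected_in f C2 -> adjacent C1 C2 ->
  (forall y, y \in N1 -> y != q -> adjacent C1 (B y)) ->
  (forall y, y \in N2 -> y != q -> adjacent C2 (B y)) ->
  is_model (split_rel e q N1 N2)
    (fun o => match o with Some x => if x == q then C1 else B x | None => C2 end).
Proof.
move=> [ne [dj [conn adj]]] CE C12 ne1 ne2 c1 c2 a12 adj1 adj2.
have C1B : C1 \subset B q by rewrite -CE subsetUl.
have C2B : C2 \subset B q by rewrite -CE subsetUr.
have owner := (disjoint_familyP B).1 dj.
split; [|split; [|split]].
- by case=> [x|] //=; case: (x == q).
- apply/disjoint_familyP => -[x|] [y|] u //=.
  + case: (eqVneq x q) => [->|xq]; case: (eqVneq y q) => [->|yq] // ux uy.
    * by rewrite (owner _ _ _ (subsetP C1B _ ux) uy).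
    * by rewrite (owner _ _ _ ux (subsetP C1B _ uy)).
    * by rewrite (owner _ _ _ ux uy).
  + case: (eqVneq x q) => [_ ux uy|xq ux uy]; first by have := disjointFr C12 ux; rewrite uy.
    by move: xq; rewrite (owner _ _ _ ux (subsetP C2B _ uy)) eqxx.
  + case: (eqVneq y q) => [_ ux uy|yq ux uy]; first by have := disjointFr C12 uy; rewrite ux.
    by move: yq; rewrite (owner _ _ _ uy (subsetP C2B _ ux)) eqxx.
- by case=> [x|] //=; case: (x == q).
- case=> [x|] [y|] //=; rewrite /split_rel.
  + case: (eqVneq x q) => [_ /andP [yq yN1]|xq]; first by rewrite (negbTE yq); exact: adj1.
    by case: (eqVneq y q) => [_ /adj1 /(_ xq) /adjacent_sym|yq /adj].
  + by case: (eqVneq x q) => [_ _|xq /adj2 /(_ xq) /adjacent_sym].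
  + by case: (eqVneq y q) => [_ _|yq /adj2 /(_ yq)]; first exact: adjacent_sym a12.
Qed.

End Models.

Section Lemma46.
Variables (U : finType) (f : rel U) (T : finType) (e : rel T).
Variables (p1 p2 q1 q2 q3 : T) (R : {set T}).
Hypotheses (fsym : symmetric f) (firr : irreflexive f) (W4 : weakly_4_connected f).
Hypotheses (esym : symmetric e) (eirr : irreflexive e).
Hypothesis distinct : uniq [:: p1; p2; q1; q2; q3].
Hypothesis R_def : R = ~: [set p1; p2; q1; q2; q3].
Hypothesis PQ_complete : forall p q, p \in [set p1; p2] -> q \in [set q1; q2; q3] -> e p q.
Hypothesis Q_stable : forall q q', q \in [set q1; q2; q3] -> q' \in [set q1; q2; q3] -> ~~ e q q'.
Hypothesis R_large : 2 <= #|R|.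

Local Notation P := [set p1; p2].
Local Notation Q := [set q1; q2; q3].

Definition edge_outcome :=
  exists p r, [/\ p \in P, r \in R & has_minor f (add_edge e p r)].
Definition split_outcome :=
  exists q (N1 N2 : {set T}), [/\ q \in Q, split_partition e q N1 N2,
    p1 \in N1, p2 \in N2 & has_minor f (split_rel e q N1 N2)].

Lemma p1_neq_p2 : p1 != p2.
Proof. by move: distinct; rewrite /= !inE; case: (p1 =P p2). Qed.

Lemma Q_neq_P q : q \in Q -> q != p1 /\ q != p2.
Proof.
move: distinct; rewrite /= !inE !negb_or => /and3P [/and4P [_ a b c] /and3P [d g h] _].
by move=> /orP [/orP [] | ] /eqP ->; rewrite ![_ == p1]eq_sym ![_ == p2]eq_sym; split.
Qed.

Lemma P_notin_R p : p \in P -> p \notin R.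
Proof. by rewrite R_def !inE => /orP [] ->; rewrite ?orbT. Qed.

Lemma R_neq_P r : r \in R -> r != p1 /\ r != p2.
Proof. by move=> rR; split; apply: contraTneq rR => ->; apply: P_notin_R; rewrite !inE eqxx ?orbT. Qed.

Lemma Q_notin_R q : q \in Q -> q \notin R.
Proof. by rewrite R_def !inE => /orP [/orP [] | ] ->; rewrite ?orbT. Qed.

Lemma vertex_classes t : [\/ t \in R, t = p1, t = p2 | t \in Q].
Proof.
case: (boolP (t \in R)) => [tR|tR]; first exact: Or41.
have : t \in [set p1; p2; q1; q2; q3] by move: tR; rewrite R_def inE negbK.
rewrite !inE => /orP [/orP [/orP [/orP [] | ] | ] | ] /eqP ->;
  by [apply: Or42 | apply: Or43 | apply: Or44; rewrite eqxx ?orbT].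
Qed.

Lemma Q_neighbours q y : q \in Q -> e q y -> [\/ y = p1, y = p2 | y \in R].
Proof.
move=> qQ eqy; case: (vertex_classes y) => [yR|->|->|yQ]; [exact: Or33 | exact: Or31 | exact: Or32 |].
by move: (Q_stable qQ yQ); rewrite eqy.
Qed.

Lemma Q_adj_P q p : q \in Q -> p \in P -> e q p.
Proof. by move=> qQ pP; rewrite esym; exact: PQ_complete. Qed.

Definition P_part (B : T -> {set U}) := B p1 :|: B p2.

Lemma P_part_grows (B B' : T -> {set U}) w :
  B p1 \subset B' p1 -> B p2 \subset B' p2 -> w \in P_part B' -> w \notin P_part B ->
  #|P_part B| < #|P_part B'|.
Proof. by move=> s1 s2; apply: subset_card_lt; exact: setUSS. Qed.

Lemma mem_P_part (B : T -> {set U}) p u : p \in P -> u \in B p -> u \in P_part B.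
Proof. by rewrite !inE => /orP [] /eqP -> ->; rewrite ?orbT. Qed.

Lemma notin_P_part (B : T -> {set U}) t u : is_model f e B ->
  t != p1 -> t != p2 -> u \in B t -> u \notin P_part B.
Proof.
case=> _ [dj _] tp1 tp2 ut.
by rewrite inE negb_or (disjointFr (dj _ _ tp1) ut) (disjointFr (dj _ _ tp2) ut).
Qed.

Lemma edge_outcome_of_adjacency (B : T -> {set U}) p r : is_model f e B ->
  p \in P -> r \in R -> adjacent f (B p) (B r) -> edge_outcome.
Proof. by move=> mB pP rR a; exists p, r; split => //; exists B; exact: model_add_edge. Qed.

Lemma grow_free_neighbour (B : T -> {set U}) i u w : is_model f e B ->
  i \in P -> u \in B i -> f u w -> (forall t, w \notin B t) ->
  exists B', is_model f e B' /\ #|P_part B| < #|P_part B'|.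
Proof.
move=> mB iP uB fuw free; have [_ [_ [conn adj]]] := mB.
pose B' x := if x == i then B i :|: [set w] else B x.
have grow x : B x \subset B' x by rewrite /B'; case: eqP => [->|_]; [exact: subsetUl | exact: subxx].
have wB' : w \in B' i by rewrite /B' eqxx !inE eqxx orbT.
exists B'; split; last first.
  by apply: (P_part_grows (grow p1) (grow p2) (mem_P_part iP wB')); rewrite inE !(negbTE (free _)).
apply: (@model_update _ _ _ _ fsym esym _ B' i i [set w] mB) => [x _|x /negbTE xi|||x|y eiy].
- exact: grow.
- by rewrite /B' xi.
- by rewrite /B' eqxx.
- move=> y /negbTE yi; rewrite /B' yi disjoints_subset.
  by apply/subsetP => z /set1P ->; rewrite inE free.
- rewrite !inE orbb => /eqP ->; split; first by apply/set0Pn; exists w.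
  rewrite /B' eqxx; exact: (connected_setU fsym (conn i) (@connected_set1 _ f w) uB (set11 w) fuw).
- exact: adjacent_mono (grow i) (grow y) (adj _ _ eiy).
Qed.

Lemma grow_by_transfer (B : T -> {set U}) q p (Cin Cout : {set U}) w u :
  is_model f e B -> q \in Q -> p \in P -> Cin :|: Cout = B q -> [disjoint Cin & Cout] ->
  connected_in f Cin -> connected_in f Cout -> Cout != set0 ->
  w \in Cin -> u \in B p -> f u w ->
  (forall y, e q y -> y != p -> adjacent f Cout (B y)) ->
  exists B', is_model f e B' /\ #|P_part B| < #|P_part B'|.
Proof.
move=> mB qQ pP CE C12 cin cout ne_out wC uB fuw sees; have [_ [_ [conn _]]] := mB.
have [qp1 qp2] := Q_neq_P qQ.
have pq : p != q by move: pP; rewrite !inE => /orP [] /eqP ->; rewrite eq_sym.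
have wB : w \in B q by rewrite -CE inE wC.
have ne_in : Cin != set0 by apply/set0Pn; exists w.
exists (transfer B p q Cin Cout); split.
  apply: model_transfer => //; first exact: (connected_setU fsym (conn p) cin uB wC fuw).
  exact: bipartition_adjacent (conn q) CE C12 ne_in ne_out.
apply: (P_part_grows (w := w)); rewrite ?transfer_sub // 1?eq_sym //.
  by apply: (mem_P_part pP); rewrite /transfer eqxx inE wC orbT.
exact: notin_P_part mB qp1 qp2 wB.
Qed.

Lemma split_partition_by_class q (S : pred T) r1 r2 : q \in Q ->
  r1 \in R -> e q r1 -> S r1 -> r2 \in R -> e q r2 -> ~~ S r2 ->
  split_partition e q (p1 |: [set r in R | e q r && S r]) (p2 |: [set r in R | e q r && ~~ S r]).
Proof.
move=> qQ r1R eq1 S1 r2R eq2 S2.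
have p1R : p1 \notin R by apply: P_notin_R; rewrite !inE eqxx.
have p2R : p2 \notin R by apply: P_notin_R; rewrite !inE eqxx orbT.
split; [apply/setP => y | split; [apply/setP => y | split; apply/card_gt1P]].
- rewrite !inE; case: (vertex_classes y) => [yR|->|->|yQ].
  + have [/negbTE -> /negbTE ->] := R_neq_P yR; rewrite yR /=.
    by case: (e q y); case: (S y).
  + by rewrite eqxx Q_adj_P // !inE eqxx.
  + by rewrite eqxx orbT Q_adj_P // !inE eqxx orbT.
  + have [/negbTE yp1 /negbTE yp2] := Q_neq_P yQ.
    by rewrite yp1 yp2 (negbTE (Q_notin_R yQ)) (negbTE (Q_stable qQ yQ)).
- rewrite !inE; case: (vertex_classes y) => [yR|->|->|yQ].
  + have [/negbTE -> /negbTE ->] := R_neq_P yR.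
    by case: (S y); rewrite !andbF.
  + by rewrite eqxx (negbTE p1_neq_p2) (negbTE p1R) !andbF.
  + by rewrite eqxx eq_sym (negbTE p1_neq_p2) (negbTE p2R).
  + have [/negbTE yp1 /negbTE yp2] := Q_neq_P yQ.
    by rewrite yp1 yp2 (negbTE (Q_notin_R yQ)).
- by exists p1, r1; rewrite !inE eqxx r1R eq1 S1 orbT eq_sym (R_neq_P r1R).1.
- by exists p2, r2; rewrite !inE eqxx r2R eq2 S2 orbT eq_sym (R_neq_P r2R).2.
Qed.

(* The second outcome, from a bipartition B q = C1 + C2 in which C1 contains a
   vertex attached to B p1 and sees some R-neighbour r1 of q, while C2 contains
   a vertex attached to B p2 and C1 misses the R-neighbour r2 of q: split q
   into C1 (seeing p1 and the R-neighbours C1 sees) and C2 (the rest). *)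
Lemma split_outcome_of_parts (B : T -> {set U}) q (C1 C2 : {set U}) s s' u1 u2 r1 r2 :
  is_model f e B -> q \in Q -> C1 :|: C2 = B q -> [disjoint C1 & C2] ->
  connected_in f C1 -> connected_in f C2 ->
  s \in C1 -> s' \in C2 -> u1 \in B p1 -> f u1 s -> u2 \in B p2 -> f u2 s' ->
  r1 \in R -> e q r1 -> adjacentb f C1 (B r1) ->
  r2 \in R -> e q r2 -> ~~ adjacentb f C1 (B r2) -> split_outcome.
Proof.
move=> mB qQ CE C12 c1 c2 sC1 s'C2 u1B fu1 u2B fu2 r1R eq1 a1 r2R eq2 na2.
have [_ [_ [conn adj]]] := mB.
have ne1 : C1 != set0 by apply/set0Pn; exists s.
have ne2 : C2 != set0 by apply/set0Pn; exists s'.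
set sees_C1 := fun r => adjacentb f C1 (B r).
exists q, (p1 |: [set r in R | e q r && sees_C1 r]), (p2 |: [set r in R | e q r && ~~ sees_C1 r]).
split; rewrite ?setU11 //; first exact: split_partition_by_class qQ r1R eq1 a1 r2R eq2 na2.
exists (fun o => match o with Some x => if x == q then C1 else B x | None => C2 end).
apply: model_split => //.
- exact: bipartition_adjacent (conn q) CE C12 ne1 ne2.
- move=> y; rewrite !inE => /orP [/eqP ->|/and3P [_ _ /adjacentP //]] _.
  by exists s, u1; rewrite sC1 u1B fsym.
- move=> y; rewrite !inE => /orP [/eqP ->|/and3P [_ eqy /negP na]] _.
    by exists s', u2; rewrite s'C2 u2B fsym.
  by have := adj _ _ eqy; rewrite -CE => /adjacent_setU [/adjacentP /na|].
Qed.

(* Bipartition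
   B q into connected C1 (with s) and C2 (with s'): if C2 sees the branch sets
   of all R-neighbours of q, move C1 to p1; symmetrically move C2 to p2;
   otherwise C1 and C2 each miss an R-neighbour the other sees, a split of q. *)
Lemma grow_or_split (B : T -> {set U}) q s s' u1 u2 : is_model f e B -> q \in Q ->
  s \in B q -> s' \in B q -> s != s' -> u1 \in B p1 -> f u1 s -> u2 \in B p2 -> f u2 s' ->
  split_outcome \/ exists B', is_model f e B' /\ #|P_part B| < #|P_part B'|.
Proof.
move=> mB qQ sB s'B ss' u1B fu1 u2B fu2; have [_ [_ [conn adj]]] := mB.
have [C1 [C2 [CE C12 c1 c2 [sC1 s'C2]]]] := connected_bipartition fsym (conn q) sB s'B ss'.
have p1P : p1 \in P by rewrite !inE eqxx.
have p2P : p2 \in P by rewrite !inE eqxx orbT.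
have ne1 : C1 != set0 by apply/set0Pn; exists s.
have ne2 : C2 != set0 by apply/set0Pn; exists s'.
case: (classic (forall r, r \in R -> e q r -> adjacent f C2 (B r))) => [C2_sees|C2_misses].
  right; apply: (grow_by_transfer mB qQ p1P CE C12 c1 c2 ne2 sC1 u1B fu1).
  move=> y eqy yp1; case: (Q_neighbours qQ eqy) => [yE|->|yR]; last exact: C2_sees.
  - by rewrite yE eqxx in yp1.
  - by exists s', u2; rewrite s'C2 u2B fsym.
case: (classic (forall r, r \in R -> e q r -> adjacent f C1 (B r))) => [C1_sees|C1_misses].
  right; apply: (grow_by_transfer mB qQ p2P _ _ c2 c1 ne1 s'C2 u2B fu2).
  - by rewrite setUC.
  - by rewrite disjoint_sym.
  move=> y eqy yp2; case: (Q_neighbours qQ eqy) => [->|yE|yR]; last exact: C1_sees.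
  - by exists s, u1; rewrite sC1 u1B fsym.
  - by rewrite yE eqxx in yp2.
have [r1 [r1R eq1 na1]] : exists r1, [/\ r1 \in R, e q r1 & ~ adjacent f C2 (B r1)].
  by apply: NNPP => none; apply: C2_misses => r rR eqr; apply: NNPP => na; apply: none; exists r.
have [r2 [r2R eq2 na2]] : exists r2, [/\ r2 \in R, e q r2 & ~ adjacent f C1 (B r2)].
  by apply: NNPP => none; apply: C1_misses => r rR eqr; apply: NNPP => na; apply: none; exists r.
left.
apply: (split_outcome_of_parts mB qQ CE C12 c1 c2 sC1 s'C2 u1B fu1 u2B fu2 r1R eq1 _ r2R eq2).
- by apply/adjacentP; have := adj _ _ eq1; rewrite -CE => /adjacent_setU [].
- by apply/negP => /adjacentP.
Qed.

(* The hypothesis of the last case: within each branch set of Q, a vertex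
   attached to B p1 and a vertex attached to B p2 coincide. *)
Definition single_attachment (B : T -> {set U}) := forall q s s' u1 u2,
  q \in Q -> s \in B q -> s' \in B q -> u1 \in B p1 -> f u1 s -> u2 \in B p2 -> f u2 s' -> s = s'.

(* Then all boundary vertices of P_part B inside B q coincide, since B q is
   attached to both B p1 and B p2. *)
Lemma attachment_unique (B : T -> {set U}) q : is_model f e B -> single_attachment B ->
  q \in Q -> exists x, forall w, w \in B q -> w \in boundary f (P_part B) -> w = x.
Proof.
move=> [_ [_ [_ adj]]] single qQ.
have [v1 [x [v1B xB fvx]]] := adj _ _ (PQ_complete (set21 p1 p2) qQ).
have [v2 [y [v2B yB fvy]]] := adj _ _ (PQ_complete (set22 p1 p2) qQ).
have xy := single _ _ _ _ _ qQ xB yB v1B fvx v2B fvy.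
exists x => w wB; rewrite inE => /andP [_ /existsP [u /andP [uP fuw]]].
case/setUP: uP => uB; first by rewrite xy (single _ _ _ _ _ qQ wB yB uB fuw v2B fvy).
by rewrite (single _ _ _ _ _ qQ xB wB v1B fvx uB fuw).
Qed.

(* If no improvement applies, P_part B has at most three boundary vertices:
   each lies in a branch set, which must be one of the three in Q. *)
Lemma P_part_boundary_small (B : T -> {set U}) : is_model f e B ->
  (forall p r, p \in P -> r \in R -> ~ adjacent f (B p) (B r)) ->
  (forall u w, u \in P_part B -> f u w -> exists t, w \in B t) ->
  single_attachment B -> #|boundary f (P_part B)| <= 3.
Proof.
move=> mB noPR covered single.
have [x1 h1] : exists x, forall w, w \in B q1 -> w \in boundary f (P_part B) -> w = x.
  by apply: attachment_unique mB single _; rewrite !inE eqxx.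
have [x2 h2] : exists x, forall w, w \in B q2 -> w \in boundary f (P_part B) -> w = x.
  by apply: attachment_unique mB single _; rewrite !inE eqxx orbT.
have [x3 h3] : exists x, forall w, w \in B q3 -> w \in boundary f (P_part B) -> w = x.
  by apply: attachment_unique mB single _; rewrite !inE eqxx !orbT.
apply: (@leq_trans #|[set x1; x2; x3]|).
  apply: subset_leq_card; apply/subsetP => w wb; have := wb.
  rewrite inE => /andP [wP /existsP [u /andP [uP fuw]]]; have [t wt] := covered _ _ uP fuw.
  case: (vertex_classes t) => [tR|tE|tE|].
  - case/setUP: uP => uB;
      [case: (noPR _ _ (set21 p1 p2) tR) | case: (noPR _ _ (set22 p1 p2) tR)]; by exists u, w.
  - by move: wP; rewrite inE -tE wt.
  - by move: wP; rewrite inE -tE wt orbT.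
  - rewrite !inE => /orP [/orP [] | ] /eqP tE; subst t;
      by [rewrite (h1 _ wt wb) eqxx | rewrite (h2 _ wt wb) eqxx orbT | rewrite (h3 _ wt wb) eqxx orbT].
rewrite -setUA; apply: leq_trans (leq_card_setU _ _) _.
by rewrite cards1 -[3]/(1 + 2) leq_add2l cards2; case: (_ != _).
Qed.

(* When no improvement applies, weak 4-connectivity is violated: P_part B
   contains a vertex of B p1 and one of B p2, vertices of two branch sets of R
   lie beyond its boundary, and that boundary has at most three vertices. *)
Lemma tight_model_impossible (B : T -> {set U}) : is_model f e B ->
  (forall p r, p \in P -> r \in R -> ~ adjacent f (B p) (B r)) ->
  (forall u w, u \in P_part B -> f u w -> exists t, w \in B t) ->
  single_attachment B -> False.
Proof.
move=> mB noPR covered single; have [ne [dj _]] := mB.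
have := P_part_boundary_small mB noPR covered single; apply/negP; rewrite -ltnNge.
have [u1 u1B] := set0Pn _ (ne p1); have [u2 u2B] := set0Pn _ (ne p2).
have [r [r' [rR r'R rr']]] := card_gt1P R_large.
have [y yB] := set0Pn _ (ne r); have [y' y'B] := set0Pn _ (ne r').
have beyond t v : t \in R -> v \in B t -> v \notin P_part B :|: boundary f (P_part B).
  move=> tR vB; have [tp1 tp2] := R_neq_P tR.
  rewrite inE negb_or (notin_P_part mB tp1 tp2 vB) inE (notin_P_part mB tp1 tp2 vB) /=.
  apply/existsP => -[u /andP [/setUP [] uB fuv]].
    by apply: (noPR _ _ (set21 p1 p2) tR); exists u, v.
  by apply: (noPR _ _ (set22 p1 p2) tR); exists u, v.
apply: (boundary_ge4 fsym firr W4 (a1 := u1) (a2 := u2) _ _ _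
          (beyond _ _ rR yB) (beyond _ _ r'R y'B)).
- by rewrite inE u1B.
- by rewrite inE u2B orbT.
- by apply: contraTneq u2B => <-; rewrite (disjointFr (dj _ _ p1_neq_p2) u1B).
- by apply: contraTneq y'B => <-; rewrite (disjointFr (dj _ _ rr') yB).
Qed.

Lemma improve_model (B : T -> {set U}) : is_model f e B ->
  [\/ edge_outcome, split_outcome | exists B', is_model f e B' /\ #|P_part B| < #|P_part B'|].
Proof.
move=> mB.
case: (classic (exists p r, [/\ p \in P, r \in R & adjacent f (B p) (B r)]))
  => [[p [r [pP rR a]]]|noPR].
  by apply: Or31; exact: edge_outcome_of_adjacency mB pP rR a.
case: (classic (exists u w, [/\ u \in P_part B, f u w & forall t, w \notin B t])) => [|covered].
  move=> [u [w [/setUP uP fuw free]]]; apply: Or33.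
  by case: uP => uB; [apply: (grow_free_neighbour mB (set21 p1 p2) uB fuw free)
                     | apply: (grow_free_neighbour mB (set22 p1 p2) uB fuw free)].
case: (classic (single_attachment B)) => [single|].
  exfalso; apply: (tight_model_impossible mB) single.
    by move=> p r pP rR a; apply: noPR; exists p, r.
  move=> u w uP fuw; apply: NNPP => none; apply: covered; exists u, w; split => // t.
  by apply/negP => wt; apply: none; exists t.
move=> not_single.
have [q [s [s' [u1 [u2 [qQ sB s'B [u1B fu1 u2B fu2] ss']]]]]] :
    exists q s s' u1 u2, [/\ q \in Q, s \in B q, s' \in B q,
      [/\ u1 \in B p1, f u1 s, u2 \in B p2 & f u2 s'] & s != s'].
  apply: NNPP => none; apply: not_single => q s s' u1 u2 qQ sB s'B u1B fu1 u2B fu2.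
  by case: (eqVneq s s') => // ss'; case: none; exists q, s, s', u1, u2.
by case: (grow_or_split mB qQ sB s'B ss' u1B fu1 u2B fu2) => [?|?]; [apply: Or32 | apply: Or33].
Qed.

End Lemma46.

Theorem lemma4p6 (U : finType) (f : rel U) (T : finType) (e : rel T)
  (p1 p2 q1 q2 q3 : T) (R : {set T}) :
  simple_graph f -> weakly_4_connected f ->
  simple_graph e -> has_minor f e ->
  (* P = {p1,p2}, Q = {q1,q2,q3}, R partition V(G1) *)
  uniq [:: p1; p2; q1; q2; q3] ->
  R = ~: [set p1; p2; q1; q2; q3] ->
  (* all edges between P and Q *)
  (forall p q, p \in [set p1; p2] -> q \in [set q1; q2; q3] -> e p q) ->
  (* no edge inside Q *)
  (forall q q', q \in [set q1; q2; q3] -> q' \in [set q1; q2; q3] -> ~~ e q q') ->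
  2 <= #|R| ->
  separation e ([set p1; p2] :|: [set q1; q2; q3]) ([set q1; q2; q3] :|: R) ->
  nontrivial_sep ([set p1; p2] :|: [set q1; q2; q3]) ([set q1; q2; q3] :|: R) ->
  sep_order ([set p1; p2] :|: [set q1; q2; q3]) ([set q1; q2; q3] :|: R) = 3 ->
  (exists p r, [/\ p \in [set p1; p2], r \in R & has_minor f (add_edge e p r)])
  \/
  (exists q (N1 N2 : {set T}),
     [/\ q \in [set q1; q2; q3], split_partition e q N1 N2,
         p1 \in N1, p2 \in N2 & has_minor f (split_rel e q N1 N2)]).
Proof.
move=> [fsym firr] W4 [esym eirr] [B mB] distinct R_def PQ_complete Q_stable R_large _ _ _.
apply: NNPP => /not_or_and [no_edge no_split].
have improve := improve_model fsym firr W4 esym eirr distinct R_def PQ_complete Q_stable R_large.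
apply: (@no_strict_improvement _ (is_model f e) (fun B => #|P_part p1 p2 B|) #|U| _ _ B mB).
  by move=> B' _; exact: max_card.
by move=> B' /improve [/no_edge []|/no_split []|].
Qed.
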